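(* For every integer $t_1\geq 2$, setting $t_2=t_1+1$, there exist a connected graph $G$ and a function $g:A\to B$ such that $fix(G)=t_1$ and $fix(F_G)=t_2$.
   Context: A set $S\subseteq V(H)$ is a fixing set of a graph $H$ if the only automorphism of $H$ fixing every vertex of $S$ is the identity; $fix(H)$ is the minimum cardinality of a fixing set of $H$. Functigraph: let $G_1,G_2$ be disjoint copies of a connected graph $G$, with $A=V(G_1)$, $B=V(G_2)$, and let $g:A\to B$ be a function. The functigraph $F_G$ has vertex set $A\cup B$ and edge set $E(G_1)\cup E(G_2)\cup\{ug(u):u\in A\}$. *)

From mathcomp Require Import all_boot all_fingroup.
Set Implicit Arguments. Unset Strict Implicit. Unset Printing Implicit Defensive.

Definition simple_graph (T : finType) (e : rel T) : Prop :=
  symmetric e /\ irreflexive e.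

Definition connected_graph (T : finType) (e : rel T) : Prop :=
  forall x y : T, connect e x y.

Definition is_autb (T : finType) (e : rel T) (s : {perm T}) : bool :=
  [forall x, [forall y, e (s x) (s y) == e x y]].

Definition fixingb (T : finType) (e : rel T) (S : {set T}) : bool :=
  [forall s : {perm T}, (is_autb e s && [forall x in S, s x == x]) ==> (s == 1%g)].

(* fix(H): minimum cardinality of a fixing set ([set: T] is always fixing) *)
Definition fixn (T : finType) (e : rel T) : nat :=
  #|[arg min_(S < [set: T] | fixingb e S) #|S|]|.

(* Functigraph: vertex set A + B, two copies of G (inl = A, inr = B),
   plus edges u -- g u for u in A. *)
Definition functigraph (T : finType) (e : rel T) (g : T -> T) : rel (T + T) :=
  fun x y =>
    match x, y with
    | inl u, inl v => e u v
    | inr u, inr v => e u v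
    | inl u, inr w => g u == w
    | inr w, inl u => g u == w
    end.

From mathcomp Require Import all_boot all_fingroup zify.
Set Implicit Arguments. Unset Strict Implicit. Unset Printing Implicit Defensive.

(* Take G = K_{1,n}: its leaves are pairwise twins, so fix(G) = n - 1.
   For n = t1 + 1 >= 4, split the leaves into three that g sends to the centre of
   the second copy and t1 - 2 that g sends to their own copies.  In F_G the twin
   classes are the three free leaves of the first copy, the three leaves of the
   second copy outside the image of g, and the t1 - 2 pairs {leaf, image}; a
   transposition inside a class is an automorphism, so a fixing set meets all but
   one member of each class, giving 2 + 2 + (t1 - 3) = t1 + 1.  For t1 = 2 take
   K_{1,3} with g constant onto one leaf: the three free leaves cost 2 and the two
   leaves of the second copy outside the image cost 1.  Conversely, the vertices of
   these fixing sets pin down the remaining vertices one by one, each being the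
   only vertex with its neighbourhood among the vertices already fixed. *)


Section FixingSets.
Variables (T : finType) (e : rel T).

Lemma is_autbP (s : {perm T}) :
  reflect (forall x y, e (s x) (s y) = e x y) (is_autb e s).
Proof.
apply: (iffP forallP) => [H x y | H x]; first exact/eqP/(forallP (H x)).
by apply/forallP => y; rewrite H.
Qed.

Lemma fixingbP (S : {set T}) :
  reflect (forall s : {perm T}, is_autb e s -> {in S, forall x, s x = x} -> s = 1%g)
          (fixingb e S).
Proof.
apply: (iffP forallP) => [H s aut_s fixS | H s].
  by apply/eqP/(implyP (H s)); rewrite aut_s; apply/forall_inP => x /fixS ->.
by apply/implyP => /andP[aut_s /forall_inP fixS]; apply/eqP/H => // x /fixS/eqP.
Qed.

Lemma nontrivial_aut_not_fixing (S : {set T}) (s : {perm T}) :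
  is_autb e s -> {in S, forall x, s x = x} -> s != 1%g -> ~~ fixingb e S.
Proof. by move=> aut_s fixS; apply: contra => /fixingbP/(_ s aut_s fixS)->. Qed.

Lemma fixn_eq N (S0 : {set T}) :
  fixingb e S0 -> #|S0| = N -> (forall S : {set T}, fixingb e S -> N <= #|S|) ->
  fixn e = N.
Proof.
move=> fixS0 <- minS0; rewrite /fixn; case: arg_minnP => [|S fixS minS].
  by apply/fixingbP => s _ fixT; apply/permP => x; rewrite perm1 fixT ?inE.
by apply/eqP; rewrite eqn_leq minS0 // minS.
Qed.

(* An automorphism fixing [P] pointwise maps [x] to a vertex with the same
   neighbourhood in [P]; if [s x] were in [P] then injectivity gives [s x = x]. *)
Lemma aut_fix_unique_nbhd (s : {perm T}) (P : pred T) x :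
  is_autb e s -> (forall z, P z -> s z = z) ->
  (forall y, ~~ P y -> (forall z, P z -> e y z = e x z) -> y = x) -> s x = x.
Proof.
move=> /is_autbP aut_s fixP uniq_x; case Psx : (P (s x)).
  exact: perm_inj (fixP _ Psx).
by apply: uniq_x => [|z Pz]; rewrite ?Psx // -{1}(fixP z Pz) aut_s.
Qed.

End FixingSets.

Lemma perm_neq1 (T : finType) (s : {perm T}) x : s x != x -> s != 1%g.
Proof. by apply: contraNneq => ->; rewrite perm1. Qed.

Lemma perm_fix_last (T : finType) (s : {perm T}) x :
  (forall y, y != x -> s y = y) -> s x = x.
Proof. by move=> fix_s; case: (eqVneq (s x) x) => // /fix_s/perm_inj. Qed.

Lemma card_compl_le1 (T : finType) (X : {set T}) :
  (forall i j, i \notin X -> j \notin X -> i = j) -> #|T| <= #|X|.+1.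
Proof.
move=> H; rewrite -(cardsC X) -addn1 leq_add2l.
by apply/card_le1_eqP => i j; rewrite !inE => Hi Hj; exact: H.
Qed.

Lemma card_sum_preim (A B : finType) (S : {set A + B}) :
  #|S| = #|inl @^-1: S| + #|inr @^-1: S|.
Proof.
rewrite -!sum1_card big_sumType.
by congr (_ + _); apply: eq_bigl => x; rewrite inE.
Qed.

Lemma card_option_preim (A : finType) (S : {set option A}) :
  #|S| = (None \in S) + #|Some @^-1: S|.
Proof.
rewrite (cardsD1 None S); congr (_ + _).
rewrite -[RHS](card_imset _ (@Some_inj _)); apply: eq_card => -[x|].
  by rewrite !inE (mem_imset _ _ (@Some_inj _)) inE.
by rewrite !inE; apply/esym/negbTE/imsetP => -[].
Qed.

Section SumPerm.
Variables (A B : finType).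

Definition sum_map (p1 : {perm A}) (p2 : {perm B}) (v : A + B) : A + B :=
  match v with inl x => inl (p1 x) | inr y => inr (p2 y) end.

Lemma sum_map_inj p1 p2 : injective (sum_map p1 p2).
Proof. by move=> [x|x] [y|y] //= [/perm_inj ->]. Qed.

Definition perm_sum p1 p2 : {perm A + B} := perm (@sum_map_inj p1 p2).

Lemma perm_sumE p1 p2 v : perm_sum p1 p2 v = sum_map p1 p2 v.
Proof. by rewrite permE. Qed.

End SumPerm.

Lemma functigraph_aut_sum (T : finType) (e : rel T) (g : T -> T) (p1 p2 : {perm T}) :
  is_autb e p1 -> is_autb e p2 -> (forall x, g (p1 x) = p2 (g x)) ->
  is_autb (functigraph e g) (perm_sum p1 p2).
Proof.
move=> /is_autbP aut1 /is_autbP aut2 gp; apply/is_autbP => -[x|x] [y|y];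
  by rewrite !perm_sumE /= ?aut1 ?aut2 ?gp ?(inj_eq perm_inj).
Qed.

Section Star.
Variable L : finType.

Definition star : rel (option L) := fun x y => (x == None) != (y == None).

Lemma star_simple : simple_graph star.
Proof. by split=> [x y | x]; rewrite /star ?eqxx // eq_sym. Qed.

Lemma star_connected : connected_graph star.
Proof.
have center_conn x : connect star x None.
  by case: x => [a|]; [apply: connect1 | apply: connect0].
move=> x y; apply: connect_trans (center_conn x) _.
by rewrite (sym_connect_sym star_simple.1) center_conn.
Qed.

Lemma star_aut (s : {perm option L}) : s None = None -> is_autb star s.
Proof.
move=> sN; have sE z : (s z == None) = (z == None) by rewrite -{1}sN (inj_eq perm_inj).
by apply/is_autbP => x y; rewrite /star !sE.
Qed.

Lemma star_aut_tperm (a b : L) : is_autb star (tperm (Some a) (Some b)).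
Proof. exact/star_aut/tpermD. Qed.

(* Two leaves off a fixing set can be swapped, so a fixing set misses at most
   one leaf; the leaves minus one fix the centre as the only common neighbour. *)
Lemma fixn_star (a b : L) : a != b -> fixn star = #|L|.-1.
Proof.
move=> neq_ab; set S0 := ~: [set None; Some a].
have cardS0 : #|S0| = #|L|.-1.
  by rewrite cardsCs setCK cards2 card_option /= subSS subn1.
apply: (fixn_eq _ cardS0) => [|S fixS].
  apply/fixingbP => s aut_s fixS0.
  have fixN : s None = None.
    apply: (aut_fix_unique_nbhd aut_s (P := mem S0)) => // y.
    rewrite !inE negbK => /orP[/eqP -> // | /eqP ->] /(_ (Some b)).
    by rewrite !inE /= /star (inj_eq (@Some_inj _)) eq_sym neq_ab => /(_ isT).
  apply/permP => x; rewrite perm1; case: (eqVneq x (Some a)) => [->|].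
    apply: perm_fix_last => y; case: (eqVneq y None) => [-> //|yN yA].
    by apply: fixS0; rewrite !inE negb_or yN yA.
  case: (eqVneq x None) => [-> // | xN xA].
  by apply: fixS0; rewrite !inE negb_or xN xA.
rewrite (card_option_preim S) -ltnS prednK ?card_gt0; last first.
  by apply/card_gt0P; exists a.
have /leq_trans-> // : #|L| <= #|Some @^-1: S|.+1; last by rewrite ltnS leq_addl.
apply: card_compl_le1 => i j; rewrite !inE => iS jS; apply/eqP; apply: contraTT fixS => neq_ij.
apply: (nontrivial_aut_not_fixing (star_aut_tperm i j)).
  by move=> x xS; rewrite tpermD //; [move: iS | move: jS]; apply: contra => /eqP->.
by apply: (perm_neq1 (x := Some i)); rewrite tpermL (inj_eq (@Some_inj _)) eq_sym.
Qed.

End Star.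

Section StarFunctigraph.
Variables (L : finType) (g : option L -> option L).
Local Notation F := (functigraph (@star L) g).

Lemma star_functigraph_sum_not_fixing (S : {set option L + option L})
    (p1 p2 : {perm option L}) v :
  p1 None = None -> p2 None = None -> (forall x, g (p1 x) = p2 (g x)) ->
  {in S, forall w, perm_sum p1 p2 w = w} -> perm_sum p1 p2 v != v ->
  ~~ fixingb F S.
Proof.
move=> p1N p2N gp fixS /perm_neq1.
exact: nontrivial_aut_not_fixing (functigraph_aut_sum (star_aut p1N) (star_aut p2N) gp) fixS.
Qed.

Variables (S : {set option L + option L}) (a b : L).
Hypothesis neq_ab : a != b.
Let swap := tperm (Some a) (Some b).

Lemma swap_neq : swap (Some a) != Some a.
Proof. by rewrite tpermL (inj_eq (@Some_inj _)) eq_sym. Qed.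

Lemma swap_notin (side : option L -> option L + option L) x :
  side (Some a) \notin S -> side (Some b) \notin S -> side x \in S -> swap x = x.
Proof.
by move=> aS bS xS; rewrite tpermD //; [move: aS | move: bS]; apply: contraNneq => ->.
Qed.

Lemma swap_fibre_not_fixing :
  g (Some a) = g (Some b) -> inl (Some a) \notin S -> inl (Some b) \notin S ->
  ~~ fixingb F S.
Proof.
move=> gab aS bS; apply: (@star_functigraph_sum_not_fixing _ swap 1 (inl (Some a))).
- exact: tpermD.
- by rewrite perm1.
- by move=> x; rewrite perm1; case: tpermP => // ->.
- by move=> [x|x] xS; rewrite perm_sumE /= ?perm1 // (swap_notin aS bS).
- by rewrite perm_sumE /= (inj_eq (@inl_inj _ _)) swap_neq.
Qed.

Lemma swap_unhit_not_fixing :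
  (forall x, g x != Some a) -> (forall x, g x != Some b) ->
  inr (Some a) \notin S -> inr (Some b) \notin S -> ~~ fixingb F S.
Proof.
move=> ga gb aS bS; apply: (@star_functigraph_sum_not_fixing _ 1 swap (inr (Some a))).
- by rewrite perm1.
- exact: tpermD.
- by move=> x; rewrite perm1 tpermD // eq_sym.
- by move=> [x|x] xS; rewrite perm_sumE /= ?perm1 // (swap_notin aS bS).
- by rewrite perm_sumE /= (inj_eq (@inr_inj _ _)) swap_neq.
Qed.

Lemma swap_pair_not_fixing :
  (forall x, g (swap x) = swap (g x)) ->
  inl (Some a) \notin S -> inl (Some b) \notin S ->
  inr (Some a) \notin S -> inr (Some b) \notin S -> ~~ fixingb F S.
Proof.
move=> g_swap aS bS aS' bS'.
apply: (@star_functigraph_sum_not_fixing _ swap swap (inl (Some a))) => //.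
- exact: tpermD.
- exact: tpermD.
- move=> [x|x] xS; rewrite perm_sumE /=.
    by rewrite (swap_notin aS bS).
  by rewrite (swap_notin aS' bS').
- by rewrite perm_sumE /= (inj_eq (@inl_inj _ _)) swap_neq.
Qed.

End StarFunctigraph.

Section PairedLeaves.
Variable k : nat.
Local Notation L := ('I_3 + 'I_k.+1)%type.
Local Notation V := (option L).

Definition pair_map (x : V) : V := if x is Some (inr _) then x else None.

Local Notation F := (functigraph (@star L) pair_map).
Local Notation a i := (inl (Some (inl i)) : V + V).
Local Notation b i := (inr (Some (inl i)) : V + V).
Local Notation p j := (inl (Some (inr j)) : V + V).
Local Notation q j := (inr (Some (inr j)) : V + V).

Lemma pair_fixing_card (S : {set V + V}) : fixingb F S -> k.+4 <= #|S|.
Proof.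
move=> fixS; rewrite card_sum_preim !card_option_preim !card_sum_preim.
set SA := inl @^-1: (Some @^-1: (inl @^-1: S)).
set SP := inr @^-1: (Some @^-1: (inl @^-1: S)).
set SB := inl @^-1: (Some @^-1: (inr @^-1: S)).
set SQ := inr @^-1: (Some @^-1: (inr @^-1: S)).
have leafA : #|'I_3| <= #|SA|.+1.
  apply: card_compl_le1 => i j; rewrite !inE => iS jS; apply/eqP; apply: contraTT fixS => ij.
  by apply: swap_fibre_not_fixing iS jS; rewrite // (inj_eq (@inl_inj _ _)).
have leafB : #|'I_3| <= #|SB|.+1.
  apply: card_compl_le1 => i j; rewrite !inE => iS jS; apply/eqP; apply: contraTT fixS => ij.
  by apply: swap_unhit_not_fixing iS jS; rewrite ?(inj_eq (@inl_inj _ _)) // => -[[]|].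
have pairs : #|'I_k.+1| <= #|SP :|: SQ|.+1.
  apply: card_compl_le1 => i j; rewrite !inE !negb_or => /andP[iS iS'] /andP[jS jS'].
  apply/eqP; apply: contraTT fixS => ij.
  apply: swap_pair_not_fixing iS jS iS' jS'; first by rewrite (inj_eq (@inr_inj _ _)).
  by move=> [[l|l]|]; [rewrite !tpermD | case: tpermP | rewrite !tpermD].
have := (leq_card_setU SP SQ).1; rewrite !card_ord in leafA leafB pairs; lia.
Qed.

Definition in_pair_fixing_set (v : V + V) : bool :=
  match v with
  | inl (Some (inl i)) | inr (Some (inl i)) => i != ord_max
  | inl (Some (inr j)) => j != ord_max
  | _ => false
  end.

Definition pair_fixing_set : {set V + V} := [set v | in_pair_fixing_set v].

Lemma card_pair_fixing_set : #|pair_fixing_set| = k.+4.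
Proof.
rewrite card_sum_preim !card_option_preim !card_sum_preim !inE /=.
have -> : inr @^-1: (Some @^-1: (inr @^-1: pair_fixing_set)) = set0.
  by apply/setP => j; rewrite !inE.
have cardC1 n (X : {set 'I_n.+1}) : X =i [set~ ord_max] -> #|X| = n.
  by move/eq_card->; rewrite cardsC1 card_ord.
rewrite cards0 !cardC1 ?add0n ?addn0 ?add2n ?addn2 // => i; by rewrite !inE.
Qed.

Section PairedLeavesAut.
Variable s : {perm V + V}.
Hypothesis aut_s : is_autb F s.
Hypothesis fixS : {in pair_fixing_set, forall v, s v = v}.

Lemma pair_aut_fixes_set v : in_pair_fixing_set v -> s v = v.
Proof. by move=> Sv; apply: fixS; rewrite inE. Qed.

Definition in_pair_fixed1 v := [|| in_pair_fixing_set v, v == inl None | v == inr None].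

(* [inr None] is the only neighbour of [b 0]; [inl None] is the other neighbour of [a 0]. *)
Lemma pair_aut_fixes1 v : in_pair_fixed1 v -> s v = v.
Proof.
have fixB : s (inr None) = inr None.
  apply: (aut_fix_unique_nbhd aut_s pair_aut_fixes_set) => y _ /(_ (b ord0) isT).
  by case: y => [[[i|j]|]|[[i|j]|]].
have fixA : s (inl None) = inl None.
  apply: (aut_fix_unique_nbhd aut_s pair_aut_fixes_set) => y _ nb.
  move: (nb (a ord0) isT) (nb (b ord0) isT); clear nb.
  by case: y => [[[i|j]|]|[[i|j]|]].
by case/or3P => [/pair_aut_fixes_set|/eqP->|/eqP->].
Qed.

Lemma pair_aut_fixes_q j : j != ord_max -> s (q j) = q j.
Proof.
move=> jmax; apply: (aut_fix_unique_nbhd aut_s pair_aut_fixes1) => y P1y.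
have P1p : in_pair_fixed1 (p j) by rewrite /in_pair_fixed1 /= jmax.
move/(_ _ P1p); move: P1y.
by case: y => [[[i|l]|]|[[i|l]|]] //=; rewrite ?eqxx // => _ /eqP[->].
Qed.

Lemma pair_aut_fixes_max : s (a ord_max) = a ord_max /\ s (p ord_max) = p ord_max.
Proof.
split; apply: (aut_fix_unique_nbhd aut_s pair_aut_fixes1) => y P1y nb;
  move: (nb (inl None) isT) (nb (inr None) isT) P1y; clear nb;
  by case: y => [[[i|l]|]|[[i|l]|]]; rewrite /in_pair_fixed1 //= !orbF negbK => _ _ /eqP->.
Qed.

Definition in_pair_fixed2 (v : V + V) :=
  [|| in_pair_fixed1 v, v == a ord_max, v == p ord_max
    | if v is inr (Some (inr j)) then j != ord_max else false].

Lemma pair_aut_fixes2 v : in_pair_fixed2 v -> s v = v.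
Proof.
case/or4P => [/pair_aut_fixes1 // | /eqP-> | /eqP-> |]; try by case: pair_aut_fixes_max.
by case: v => [|[[//|j]|]] // /pair_aut_fixes_q.
Qed.

Lemma pair_aut_fixes_qmax : s (q ord_max) = q ord_max.
Proof.
apply: (aut_fix_unique_nbhd aut_s pair_aut_fixes2) => y P2y.
have P2p : in_pair_fixed2 (p ord_max) by rewrite /in_pair_fixed2 eqxx !orbT.
move/(_ _ P2p); move: P2y.
by case: y => [[[i|l]|]|[[i|l]|]] //=; rewrite ?eqxx // => _ /eqP[->].
Qed.

Lemma pair_aut_trivial : s = 1%g.
Proof.
have fix_other y : y != b ord_max -> s y = y.
  have [amax pmax] := pair_aut_fixes_max.
  case: y => [[[i|j]|]|[[i|j]|]] yb; try exact: pair_aut_fixes1.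
  - by case: (eqVneq i ord_max) => [->|imax]; last exact: pair_aut_fixes_set.
  - by case: (eqVneq j ord_max) => [->|jmax]; last exact: pair_aut_fixes_set.
  - by apply: pair_aut_fixes_set; apply: contraNneq yb => ->.
  - case: (eqVneq j ord_max) => [->|]; first exact: pair_aut_fixes_qmax.
    exact: pair_aut_fixes_q.
apply/permP => x; rewrite perm1.
by case: (eqVneq x (b ord_max)) => [->|/fix_other //]; apply: perm_fix_last.
Qed.

End PairedLeavesAut.

Lemma pair_fixing_set_fixing : fixingb F pair_fixing_set.
Proof. by apply/fixingbP => s aut_s fixS; apply: pair_aut_trivial. Qed.

End PairedLeaves.

Section ConstantMap.
Local Notation V := (option 'I_3).

Definition const_map (x : V) : V := Some ord0.

Local Notation F := (functigraph (@star 'I_3) const_map).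
Local Notation i1 := (@Ordinal 3 1 isT).
Local Notation a i := (inl (Some i) : V + V).
Local Notation b i := (inr (Some i) : V + V).

Lemma const_fixing_card (S : {set V + V}) : fixingb F S -> 3 <= #|S|.
Proof.
move=> fixS; rewrite card_sum_preim !card_option_preim.
set SA := Some @^-1: (inl @^-1: S); set SB := Some @^-1: (inr @^-1: S).
have leafA : #|'I_3| <= #|SA|.+1.
  apply: card_compl_le1 => i j; rewrite !inE => iS jS; apply/eqP; apply: contraTT fixS => ij.
  exact: swap_fibre_not_fixing iS jS.
have leafB : 0 < #|SB|.
  apply/card_gt0P; case: (boolP (i1 \in SB)) => [|S1]; first by exists i1.
  case: (boolP (ord_max \in SB)) => [|S2]; first by exists ord_max.
  move: S1 S2; rewrite !inE => S1 S2.
  by have /negP[] := swap_unhit_not_fixing (g := const_map) (isT : i1 != ord_max)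
    (fun=> isT) (fun=> isT) S1 S2.
rewrite card_ord in leafA; lia.
Qed.

Definition in_const_fixing_set (v : V + V) : bool :=
  match v with
  | inl (Some i) => i != ord_max
  | inr (Some i) => i == i1
  | _ => false
  end.

Definition const_fixing_set : {set V + V} := [set v | in_const_fixing_set v].

Lemma card_const_fixing_set : #|const_fixing_set| = 3.
Proof.
rewrite card_sum_preim !card_option_preim !inE /=.
have -> : Some @^-1: (inl @^-1: const_fixing_set) = [set~ ord_max].
  by apply/setP => i; rewrite !inE.
have -> : Some @^-1: (inr @^-1: const_fixing_set) = [set i1].
  by apply/setP => i; rewrite !inE.
by rewrite cardsC1 cards1 card_ord.
Qed.

Section ConstantMapAut.
Variable s : {perm V + V}.
Hypothesis aut_s : is_autb F s.
Hypothesis fixS : {in const_fixing_set, forall v, s v = v}.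

Lemma const_aut_fixes_set v : in_const_fixing_set v -> s v = v.
Proof. by move=> Sv; apply: fixS; rewrite inE. Qed.

Definition in_const_fixed1 v := in_const_fixing_set v || (v == inr None).

(* [inr None] is the only neighbour of [b 1]. *)
Lemma const_aut_fixes1 v : in_const_fixed1 v -> s v = v.
Proof.
case/orP => [/const_aut_fixes_set // | /eqP->].
apply: (aut_fix_unique_nbhd aut_s const_aut_fixes_set) => y _ /(_ (b i1) isT).
by case: y => [[i|]|[i|]].
Qed.

(* [inl None] and [b 0] are the neighbours of [a 0]; only [b 0] is adjacent to [inr None]. *)
Lemma const_aut_fixes_a0_nbrs : s (inl None) = inl None /\ s (b ord0) = b ord0.
Proof.
split; apply: (aut_fix_unique_nbhd aut_s const_aut_fixes1) => y P1y nb;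
  move: (nb (a ord0) isT) (nb (inr None) isT) P1y; clear nb;
  by case: y => [[i|]|[i|]] //= /eqP[<-].
Qed.

Definition in_const_fixed2 v :=
  [|| in_const_fixed1 v, v == inl None | v == b ord0].

Lemma const_aut_fixes2 v : in_const_fixed2 v -> s v = v.
Proof.
have [fixA fixb0] := const_aut_fixes_a0_nbrs.
by case/or3P => [/const_aut_fixes1 // | /eqP-> | /eqP->].
Qed.

Lemma const_aut_fixes_a2 : s (a ord_max) = a ord_max.
Proof.
apply: (aut_fix_unique_nbhd aut_s const_aut_fixes2) => y P2y /(_ (inl None) isT).
move: P2y; case: y => [[i|]|[i|]] //=.
- by rewrite /in_const_fixed2 /in_const_fixed1 /= !orbF negbK => /eqP->.
- by move=> P2y /eqP[i0]; subst i; rewrite /in_const_fixed2 eqxx !orbT in P2y.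
Qed.

Lemma const_aut_trivial : s = 1%g.
Proof.
have fix_other y : y != b ord_max -> s y = y.
  have [fixA fixb0] := const_aut_fixes_a0_nbrs.
  case: y => [[i|]|[i|]] yb //; try exact: const_aut_fixes1.
  - case: (eqVneq i ord_max) => [->|imax]; first exact: const_aut_fixes_a2.
    exact: const_aut_fixes_set.
  - have [->|i1n] := eqVneq i i1; first exact: const_aut_fixes_set.
    suff -> : i = ord0 by [].
    by apply/val_inj; case: i yb i1n => -[|[|[|//]]] //= lt_i3;
      rewrite (bool_irrelevance lt_i3 isT) eqxx.
apply/permP => x; rewrite perm1.
by case: (eqVneq x (b ord_max)) => [->|/fix_other //]; apply: perm_fix_last.
Qed.

End ConstantMapAut.

Lemma const_fixing_set_fixing : fixingb F const_fixing_set.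
Proof. by apply/fixingbP => s aut_s fixS; apply: const_aut_trivial. Qed.

End ConstantMap.

Theorem lemma2p7 (t1 : nat) (ht1 : 2 <= t1) :
  exists (T : finType) (e : rel T) (g : T -> T),
    simple_graph e /\ connected_graph e /\
    fixn e = t1 /\ fixn (functigraph e g) = t1.+1.
Proof.
case: t1 ht1 => [|[|[|k]]] // _.
- exists (option 'I_3), (@star 'I_3), const_map.
  split; [exact: star_simple | split; [exact: star_connected | split]].
  + by rewrite (@fixn_star _ ord0 (@Ordinal 3 1 isT)) // card_ord.
  + exact: fixn_eq const_fixing_set_fixing card_const_fixing_set const_fixing_card.
- exists (option ('I_3 + 'I_k.+1)), (@star _), (@pair_map k).
  split; [exact: star_simple | split; [exact: star_connected | split]].
  + by rewrite (@fixn_star _ (inl ord0) (inl ord_max)) // card_sum !card_ord.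
  + exact: fixn_eq (pair_fixing_set_fixing k) (card_pair_fixing_set k) (@pair_fixing_card k).
Qed.
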